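(* Let $k\ge 2$. If $G$ is a finite simple graph admitting a closed neighborhood balanced $k$-coloring, then the Cartesian product $G\,\square\, K_2$ admits a neighborhood-balanced $k$-coloring.
   Context: For a vertex $v$, $N(v)=\{u: uv\in E\}$ and $N[v]=N(v)\cup\{v\}$. A neighborhood-balanced $k$-coloring of a graph is a map $c:V\to\{1,\dots,k\}$ such that for every vertex $v$ the numbers $|\{u\in N(v): c(u)=i\}|$, $i=1,\dots,k$, are all equal; a closed neighborhood balanced $k$-coloring is defined likewise with $N[v]$ in place of $N(v)$. The Cartesian product $G\,\square\,H$ has vertex set $V(G)\times V(H)$, with $(g,h)$ adjacent to $(g',h')$ iff ($g=g'$ and $hh'\in E(H)$) or ($h=h'$ and $gg'\in E(G)$). *)

From mathcomp Require Import all_boot.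
Set Implicit Arguments. Unset Strict Implicit. Unset Printing Implicit Defensive.

Definition simple_graph (T : finType) (e : rel T) : Prop :=
  symmetric e /\ irreflexive e.

Definition open_nbhd (T : finType) (e : rel T) (v : T) : {set T} :=
  [set u | e v u].
Definition closed_nbhd (T : finType) (e : rel T) (v : T) : {set T} :=
  v |: open_nbhd e v.

Definition color_count (T : finType) (k : nat) (c : T -> 'I_k)
  (S : {set T}) (i : 'I_k) : nat := #|[set u in S | c u == i]|.

Definition nbhd_balanced (T : finType) (e : rel T) (k : nat) (c : T -> 'I_k) : Prop :=
  forall v : T, forall i j : 'I_k,
    color_count c (open_nbhd e v) i = color_count c (open_nbhd e v) j.

Definition closed_nbhd_balanced (T : finType) (e : rel T) (k : nat) (c : T -> 'I_k) : Prop :=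
  forall v : T, forall i j : 'I_k,
    color_count c (closed_nbhd e v) i = color_count c (closed_nbhd e v) j.

Definition K2_rel : rel bool := fun a b => a != b.

Definition cart_prod (T U : finType) (e : rel T) (f : rel U) : rel (T * U) :=
  fun x y => ((x.1 == y.1) && f x.2 y.2) || ((x.2 == y.2) && e x.1 y.1).

From mathcomp Require Import all_boot.

Set Implicit Arguments.
Unset Strict Implicit.
Unset Printing Implicit Defensive.

(* Colour (v, b) by c v.  In G □ K_2 the neighbours of (v, b) are (v, ~~ b) and the
   (u, b) with u ∈ N(v); projecting to the first coordinate maps this open
   neighbourhood bijectively onto N[v], so a closed neighbourhood balanced colouring
   of G pulls back to a neighbourhood balanced colouring of G □ K_2. *)

Lemma color_count_imset (T U : finType) (k : nat) (c : T -> 'I_k)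
    (f : T -> U) (g : U -> T) :
  cancel f g -> forall (S : {set T}) (i : 'I_k),
  color_count (c \o g) (f @: S) i = color_count c S i.
Proof.
move=> fK S i; rewrite /color_count -(card_imset _ (can_inj fK)).
congr #|pred_of_set _|; apply/setP => y; rewrite inE.
apply/andP/imsetP => [[/imsetP [x Sx ->]] | [x]].
- by rewrite /= fK => cx; exists x; rewrite // inE Sx.
- by rewrite inE => /andP [Sx cx] ->; rewrite /= fK imset_f.
Qed.

Definition K2_lift (T : finType) (v : T) (b : bool) (u : T) : T * bool :=
  (u, (u == v) (+) b).

Lemma open_nbhd_cart_prod_K2 (T : finType) (e : rel T) :
  irreflexive e -> forall (v : T) (b : bool),
  open_nbhd (cart_prod e K2_rel) (v, b) = K2_lift v b @: closed_nbhd e v.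
Proof.
move=> irr v b; apply/setP => -[u b'].
have -> : ((u, b') \in K2_lift v b @: closed_nbhd e v)
          = (u \in closed_nbhd e v) && (b' == (u == v) (+) b).
  by apply/imsetP/andP => [[w Sw [-> ->]] | [Su /eqP ->]]; [split | exists u].
rewrite !inE /cart_prod /K2_rel /=.
case: (eqVneq u v) => [-> | _] /=; first by rewrite irr andbF orbF; case: b b' => [] [].
by rewrite andbC eq_sym.
Qed.

Theorem theorem2p19 (T : finType) (e : rel T) (k : nat) :
  2 <= k ->
  simple_graph e ->
  (exists c : T -> 'I_k, closed_nbhd_balanced e c) ->
  exists c' : T * bool -> 'I_k, nbhd_balanced (cart_prod e K2_rel) c'.
Proof.
move=> _ [_ irr] [c balanced]; exists (c \o fst) => -[v b] i j.
have liftK : cancel (K2_lift v b) fst by [].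
by rewrite open_nbhd_cart_prod_K2 // !(color_count_imset c liftK); apply: balanced.
Qed.
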